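(* Let $(f,t)$ be a tax-based mechanism (with $n\ge 2$ players), where each type set $\Theta_i$ is a compact subset of some $\mathbb{R}^k$ and each $t_i$ is continuous. Define $T(\theta):=\sum_{i=1}^n t_i(\theta)$, $S_i^{BCGC}(\theta_{-i}):=\max_{\theta_i'\in\Theta_i} T(\theta_i',\theta_{-i})$, and $t_i^{BCGC}(\theta):=t_i(\theta)-S_i^{BCGC}(\theta_{-i})/n$. Then: (i) the mechanism $(f,t^{BCGC})$ is feasible; (ii) if $(f,t)$ is feasible, then either $t^{BCGC}=t$ or $(f,t^{BCGC})$ dominates $(f,t)$.
   Context: Setting: a set of decisions $D$, players $1,\dots,n$ ($n\ge2$), type sets $\Theta_i$, $\Theta:=\Theta_1\times\cdots\times\Theta_n$, and initial utility functions $v_i:D\times\Theta_i\to\mathbb{R}$. A tax-based mechanism is a pair $(f,t)$ with $f:\Theta\to D$ and $t=(t_1,\dots,t_n):\Theta\to\mathbb{R}^n$; player $i$'s final utility when reports are $\theta'$ and true type is $\theta_i$ is $v_i(f(\theta'),\theta_i)+t_i(\theta')$ (so $t_i>0$ means $i$ receives money). The mechanism is feasible if $\sum_i t_i(\theta)\le 0$ for all $\theta\in\Theta$. For two mechanisms with the same decision function, $t'$ dominates $t$ if $t_i(\theta)\le t'_i(\theta)$ for all $\theta$ and all $i$, with strict inequality for some $\theta$ and some $i$. *)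

From mathcomp Require Import all_boot.
From Stdlib Require Import Reals ClassicalEpsilon.
Set Implicit Arguments. Unset Strict Implicit. Unset Printing Implicit Defensive.
Local Open Scope R_scope.

(* A point of R^k is represented by a list of reals of length k
   (coordinates read with [nth 0]).  Players are ['I_n]; a type profile is a
   map ['I_n -> list R]; player i's types live in R^(k i). *)

Definition profile (n : nat) := 'I_n -> list R.

(* sup-norm closeness (induces the usual topology of R^k) *)
Definition close (d : R) (x y : list R) : Prop :=
  forall j : nat, Rabs (nth 0 x j - nth 0 y j) < d.

Definition open_in (k : nat) (U : list R -> Prop) : Prop :=
  forall x, U x -> size x = k /\
    exists d, 0 < d /\ forall y, size y = k -> close d y x -> U y.

Definition compact_in (k : nat) (K : list R -> Prop) : Prop :=
  (forall x, K x -> size x = k) /\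
  forall (I : Type) (U : I -> list R -> Prop),
    (forall a, open_in k (U a)) ->
    (forall x, K x -> exists a, U a x) ->
    exists l : list I, forall x, K x -> exists a, List.In a l /\ U a x.

Definition inTheta (n : nat) (Theta : 'I_n -> list R -> Prop) (th : profile n) : Prop :=
  forall i, Theta i (th i).

Definition upd (n : nat) (th : profile n) (i : 'I_n) (x : list R) : profile n :=
  fun j => if j == i then x else th j.

Definition cont_on (n : nat) (Theta : 'I_n -> list R -> Prop) (g : profile n -> R) : Prop :=
  forall th, inTheta Theta th -> forall eps, 0 < eps ->
    exists d, 0 < d /\ forall th', inTheta Theta th' ->
      (forall i, close d (th' i) (th i)) -> Rabs (g th' - g th) < eps.

Definition Ttot (n : nat) (t : 'I_n -> profile n -> R) (th : profile n) : R :=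
  \big[Rplus/0]_(i < n) t i th.

Definition feasible (n : nat) (Theta : 'I_n -> list R -> Prop) (t : 'I_n -> profile n -> R) : Prop :=
  forall th, inTheta Theta th -> Ttot t th <= 0.

(* t' dominates t (same decision function) *)
Definition dominates (n : nat) (Theta : 'I_n -> list R -> Prop) (t' t : 'I_n -> profile n -> R) : Prop :=
  (forall th, inTheta Theta th -> forall i, t i th <= t' i th) /\
  (exists th i, inTheta Theta th /\ t i th < t' i th).

Definition is_max_i (n : nat) (Theta : 'I_n -> list R -> Prop) (t : 'I_n -> profile n -> R)
  (i : 'I_n) (th : profile n) (s : R) : Prop :=
  (exists x, Theta i x /\ s = Ttot t (upd th i x)) /\
  (forall x, Theta i x -> Ttot t (upd th i x) <= s).

Definition S_BCGC (n : nat) (Theta : 'I_n -> list R -> Prop) (t : 'I_n -> profile n -> R)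
  (i : 'I_n) (th : profile n) : R :=
  epsilon (inhabits 0) (is_max_i Theta t i th).

Definition t_BCGC (n : nat) (Theta : 'I_n -> list R -> Prop) (t : 'I_n -> profile n -> R)
  (i : 'I_n) (th : profile n) : R :=
  t i th - S_BCGC Theta t i th / INR n.

From mathcomp Require Import all_boot.
From Stdlib Require Import Reals Lra Psatz ClassicalEpsilon Classical FunctionalExtensionality.
Set Implicit Arguments. Unset Strict Implicit.
Local Open Scope R_scope.

(* The only analytic input is the extreme value theorem: a function that is
   continuous on a compact subset of R^k attains its maximum there.  We prove
   it directly from the open-cover definition of compactness: if no point were
   a maximiser, the "strictly improved upon near y" sets would cover K, a
   finite subcover would exist, and its best centre would improve upon itself.

   Applied to x |-> T(x, theta_{-i}) (continuous because each t_j is), this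
   shows that S_BCGC i theta really is the maximum of the slice, hence
   (a) T(theta) <= S_BCGC i theta for every i, and
   (b) S_BCGC i theta <= 0 whenever (f,t) is feasible.
   Part (i) follows by summing (a) over the n players, since
   t^BCGC_i = t_i - S_i / n.  Part (ii) follows from (b): t^BCGC_i >= t_i
   everywhere, with equality exactly where S_i = 0; so either every S_i
   vanishes on Theta (and t^BCGC = t) or some S_i is negative somewhere,
   which gives the strict improvement required by dominance. *)

Definition cont_in (K : list R -> Prop) (g : list R -> R) : Prop :=
  forall x, K x -> forall eps, 0 < eps -> exists d, 0 < d /\
    forall y, K y -> close d y x -> Rabs (g y - g x) < eps.

Lemma close_mono d d' x y : d <= d' -> close d x y -> close d' x y.
Proof. by move=> le_dd' cxy j; have := cxy j; lra. Qed.

Lemma close_refl d x : 0 < d -> close d x x.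
Proof. by move=> d_gt0 j; rewrite Rminus_diag Rabs_R0. Qed.

Lemma close_trans d e x y z : close d x y -> close e y z -> close (d + e) x z.
Proof.
move=> cxy cyz j; have := cxy j; have := cyz j.
have := Rabs_triang (nth 0 x j - nth 0 y j) (nth 0 y j - nth 0 z j).
have -> : nth 0 x j - nth 0 y j + (nth 0 y j - nth 0 z j) = nth 0 x j - nth 0 z j
  by ring.
lra.
Qed.

Lemma cont_in_sum K (I : Type) (r : seq I) (P : pred I) (F : I -> list R -> R) :
  (forall j, cont_in K (F j)) ->
  cont_in K (fun x => \big[Rplus/0]_(j <- r | P j) F j x).
Proof.
move=> contF; elim: r => [|a r IH] x Kx eps eps_gt0.
  exists 1; split; first lra.
  by move=> y _ _; rewrite !big_nil Rminus_diag Rabs_R0.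
case Pa: (P a); last first.
  have [d [d_gt0 Hd]] := IH x Kx _ eps_gt0.
  by exists d; split => // y Ky cyx; rewrite !big_cons Pa; apply: Hd.
have eps2_gt0 : 0 < eps / 2 by lra.
have [d1 [d1_gt0 H1]] := contF a x Kx _ eps2_gt0.
have [d2 [d2_gt0 H2]] := IH x Kx _ eps2_gt0.
exists (Rmin d1 d2); split; first exact: Rmin_pos.
move=> y Ky cyx; rewrite !big_cons Pa.
have h1 := H1 y Ky (close_mono (Rmin_l d1 d2) cyx).
have h2 := H2 y Ky (close_mono (Rmin_r d1 d2) cyx).
set A := F a y - F a x in h1.
set B := _ - _ in h2.
have -> : F a y + \big[Rplus/0]_(j <- r | P j) F j y -
          (F a x + \big[Rplus/0]_(j <- r | P j) F j x) = A + B by rewrite /A /B; ring.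
have := Rabs_triang A B; lra.
Qed.

Lemma list_argmax (K : list R -> Prop) (g : list R -> R) (l : list (list R)) :
  (exists a, List.In a l /\ K a) ->
  exists b, List.In b l /\ K b /\ forall a, List.In a l -> K a -> g a <= g b.
Proof.
elim: l => [[a [[] _]]|c l IH] hne.
case: (classic (exists a, List.In a l /\ K a)) => [hl|hl].
- have [b [bl [Kb Hb]]] := IH hl.
  case: (classic (K c /\ g b <= g c)) => [[Kc le_bc]|hc].
  + exists c; split; [by left|split=> // a [<-|al] Ka]; first lra.
    by have := Hb a al Ka; lra.
  + exists b; split; [by right|split=> // a [<-|al] Ka]; last exact: Hb.
    by apply: Rnot_lt_le => lt_bc; apply: hc; split => //; lra.
- have Kc : K c.
    by case: hne => a [[<-|al] Ka] //; case: hl; exists a.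
  exists c; split; [by left|split=> // a [<-|al] Ka]; first lra.
  by case: hl; exists a.
Qed.

Definition below_near (k : nat) (K : list R -> Prop) (g : list R -> R)
    (a y : list R) : Prop :=
  K a /\ size y = k /\ exists d, 0 < d /\
    forall z, size z = k -> close d z y -> K z -> g z < g a.

Lemma below_near_open k K g a : open_in k (below_near k K g a).
Proof.
move=> y [Ka [size_y [d [d_gt0 Hd]]]]; split => //.
exists (d / 2); split; first lra.
move=> z size_z czy; split => //; split => //; exists (d / 2); split; first lra.
move=> w size_w cwz Kw; apply: Hd => //.
by apply: close_mono (close_trans cwz czy); lra.
Qed.

Lemma compact_argmax k K g x0 : compact_in k K -> cont_in K g -> K x0 ->
  exists x, K x /\ forall y, K y -> g y <= g x.
Proof.
move=> [sizeK coverK] contg Kx0; apply: NNPP => no_max.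
have improve : forall x, K x -> exists a, K a /\ g x < g a.
  move=> x Kx; apply: NNPP => hx; apply: no_max; exists x; split => // y Ky.
  by apply: Rnot_lt_le => lt; apply: hx; exists y.
have cover : forall x, K x -> exists a, below_near k K g a x.
  move=> x Kx; have [a [Ka lt_xa]] := improve x Kx.
  have [d [d_gt0 Hd]] := contg x Kx (g a - g x) ltac:(lra).
  exists a; split => //; split; first exact: sizeK.
  exists d; split => // z _ czx Kz.
  by have /Rabs_def2 := Hd z Kz czx; lra.
have [l Hl] := coverK _ _ (@below_near_open k K g) cover.
have [a0 [a0l [Ka0 _]]] := Hl x0 Kx0.
have [b [bl [Kb best_b]]] := @list_argmax K g l (ex_intro _ a0 (conj a0l Ka0)).
have [a [al [Ka [_ [d [d_gt0 Hd]]]]]] := Hl b Kb.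
have := Hd b (sizeK b Kb) (close_refl b d_gt0) Kb.
by have := best_b a al Ka; lra.
Qed.

Lemma upd_self n (th : profile n) i : upd th i (th i) = th.
Proof. by apply: functional_extensionality => j; rewrite /upd; case: eqP => [->|]. Qed.

Lemma inTheta_upd n (Theta : 'I_n -> list R -> Prop) th i x :
  inTheta Theta th -> Theta i x -> inTheta Theta (upd th i x).
Proof. by move=> hth hx j; rewrite /upd; case: eqP => [->|]. Qed.

Lemma cont_on_slice n (Theta : 'I_n -> list R -> Prop) (g : profile n -> R) th i :
  cont_on Theta g -> inTheta Theta th ->
  cont_in (Theta i) (fun x => g (upd th i x)).
Proof.
move=> contg hth x Kx eps eps_gt0.
have [d [d_gt0 Hd]] := contg _ (inTheta_upd hth Kx) eps eps_gt0.
exists d; split => // y Ky cyx; apply: Hd; first exact: inTheta_upd.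
by move=> j; rewrite /upd; case: eqP => // _; apply: close_refl.
Qed.

Lemma big_Rplus_le (I : Type) (r : seq I) (F G : I -> R) :
  (forall i, F i <= G i) ->
  \big[Rplus/0]_(i <- r) F i <= \big[Rplus/0]_(i <- r) G i.
Proof.
move=> leFG; elim: r => [|a r IH]; rewrite ?big_nil ?big_cons; first lra.
by have := leFG a; lra.
Qed.

Lemma big_Rplus_subc (I : Type) (r : seq I) (F : I -> R) c :
  \big[Rplus/0]_(i <- r) (F i - c) = \big[Rplus/0]_(i <- r) F i - INR (size r) * c.
Proof.
elim: r => [|a r IH]; rewrite ?big_nil ?big_cons /=; first ring.
by rewrite IH; case: (size r) => [|m] /=; ring.
Qed.

Section BCGCComparison.
Variables (n : nat) (Theta : 'I_n -> list R -> Prop) (t : 'I_n -> profile n -> R).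
Hypothesis n_gt0 : 0 < INR n.

Lemma t_BCGC_eq i th : S_BCGC Theta t i th = 0 -> t_BCGC Theta t i th = t i th.
Proof. by move=> S0; rewrite /t_BCGC S0; field; lra. Qed.

Lemma t_BCGC_ge i th : S_BCGC Theta t i th <= 0 -> t i th <= t_BCGC Theta t i th.
Proof.
move=> S_le0; rewrite /t_BCGC /Rdiv.
have : 0 < / INR n by apply: Rinv_0_lt_compat.
nra.
Qed.

Lemma t_BCGC_gt i th : S_BCGC Theta t i th < 0 -> t i th < t_BCGC Theta t i th.
Proof.
move=> S_lt0; rewrite /t_BCGC /Rdiv.
have : 0 < / INR n by apply: Rinv_0_lt_compat.
nra.
Qed.

End BCGCComparison.

Section BCGCMaximum.
Variables (n : nat) (k : 'I_n -> nat) (Theta : 'I_n -> list R -> Prop).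
Variable t : 'I_n -> profile n -> R.
Hypothesis compact_Theta : forall i, compact_in (k i) (Theta i).
Hypothesis cont_t : forall i, cont_on Theta (t i).

Lemma S_BCGC_is_max i th :
  inTheta Theta th -> is_max_i Theta t i th (S_BCGC Theta t i th).
Proof.
move=> hth; rewrite /S_BCGC; apply: epsilon_spec.
pose g x := Ttot t (upd th i x).
have contg : cont_in (Theta i) g.
  apply: cont_in_sum => j; exact: cont_on_slice (cont_t j) hth.
have [x [Kx max_x]] := compact_argmax (compact_Theta i) contg (hth i).
by exists (g x); split; [exists x | exact: max_x].
Qed.

Lemma Ttot_le_S_BCGC i th :
  inTheta Theta th -> Ttot t th <= S_BCGC Theta t i th.
Proof.
move=> hth; have [_ upper] := S_BCGC_is_max i hth.
by have := upper _ (hth i); rewrite upd_self.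
Qed.

Lemma S_BCGC_le0 i th :
  feasible Theta t -> inTheta Theta th -> S_BCGC Theta t i th <= 0.
Proof.
move=> feas hth; have [[x [Kx ->]] _] := S_BCGC_is_max i hth.
by apply: feas; apply: inTheta_upd.
Qed.

Lemma t_BCGC_feasible : 0 < INR n -> feasible Theta (t_BCGC Theta t).
Proof.
move=> n_gt0 th hth.
have le_sum : Ttot (t_BCGC Theta t) th <=
              \big[Rplus/0]_(i < n) (t i th - Ttot t th / INR n).
  apply: big_Rplus_le => i; rewrite /t_BCGC /Rdiv.
  have := Ttot_le_S_BCGC i hth; have : 0 < / INR n by apply: Rinv_0_lt_compat.
  nra.
apply: Rle_trans le_sum _.
rewrite big_Rplus_subc -/(Ttot t th) /index_enum -enumT size_enum_ord.
by right; field; apply: Rgt_not_eq.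
Qed.

Lemma t_BCGC_eq_or_dominates : 0 < INR n -> feasible Theta t ->
  (forall th, inTheta Theta th -> forall i, t_BCGC Theta t i th = t i th) \/
  dominates Theta (t_BCGC Theta t) t.
Proof.
move=> n_gt0 feas.
case: (classic (exists th i, inTheta Theta th /\ S_BCGC Theta t i th < 0))
  => [[th [i [hth S_lt0]]] | no_neg].
- right; split; last by exists th, i; split => //; apply: (t_BCGC_gt n_gt0).
  by move=> th' hth' j; apply: (t_BCGC_ge n_gt0); apply: S_BCGC_le0.
- left => th hth i; apply: (t_BCGC_eq n_gt0).
  apply: Rle_antisym; first exact: S_BCGC_le0.
  by apply: Rnot_lt_le => S_lt0; apply: no_neg; exists th, i.
Qed.

End BCGCMaximum.

Theorem mainTheorem1 (D : Type) (n : nat) (hn : (2 <= n)%nat)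
  (k : 'I_n -> nat) (Theta : 'I_n -> list R -> Prop)
  (hcomp : forall i, compact_in (k i) (Theta i))
  (f : profile n -> D) (t : 'I_n -> profile n -> R)
  (hcont : forall i, cont_on Theta (t i)) :
  feasible Theta (t_BCGC Theta t) /\
  (feasible Theta t ->
     (forall th, inTheta Theta th -> forall i, t_BCGC Theta t i th = t i th) \/
     dominates Theta (t_BCGC Theta t) t).
Proof.
have n_gt0 : 0 < INR n by apply/lt_0_INR/ltP; apply: leq_trans hn.
split; first exact: t_BCGC_feasible hcomp hcont n_gt0.
exact: t_BCGC_eq_or_dominates hcomp hcont n_gt0.
Qed.
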